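(* Let $G$ be a topological group, let $(W_n)_{n\ge1}$ be an increasing sequence of subsets of $G$ with $\bigcup_{n\ge1}W_n=G$, let $Q\subseteq G$ and set $Q_n=W_n\cup Q$. Let $\varepsilon_0>0$ be such that every unitary representation of $G$ admitting a $(Q,\varepsilon_0)$-invariant vector has a non-zero finite dimensional subrepresentation, and suppose that $Q_n$ is not a Kazhdan set in $G$ for any $n\ge1$. Then for every sequence $(\varepsilon_n)_{n\ge1}$ of positive numbers decreasing to $0$ with $\varepsilon_1\le\varepsilon_0$, there exist finite dimensional Hilbert spaces $H_n$ and unitary representations $\pi_n$ of $G$ on $H_n$ ($n\ge1$) such that, for every $n\ge1$, $\pi_n$ has no non-zero $G$-invariant vector and there exists $a_n\in H_n$ with $\|a_n\|=1$ and $\sup_{g\in Q_n}\|\pi_n(g)a_n-a_n\|<\varepsilon_n$.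
   Context: All Hilbert spaces are complex; unitary representations are strongly continuous. For $Q\subseteq G$ and $\varepsilon>0$, a vector $x$ is $(Q,\varepsilon)$-invariant for $\pi$ if $\sup_{g\in Q}\|\pi(g)x-x\|<\varepsilon\|x\|$. A subset $Q$ is a Kazhdan set in $G$ if there exists $\varepsilon>0$ such that every unitary representation of $G$ having a $(Q,\varepsilon)$-invariant vector has a non-zero $G$-invariant vector. *)

From Stdlib Require Import Reals.
Open Scope R_scope.

Record C := mkC { Cre : R ; Cim : R }.
Definition C0 : C := mkC 0 0.
Definition C1 : C := mkC 1 0.
Definition Cadd (a b : C) : C := mkC (Cre a + Cre b) (Cim a + Cim b).
Definition Cmul (a b : C) : C :=
  mkC (Cre a * Cre b - Cim a * Cim b) (Cre a * Cim b + Cim a * Cre b).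
Definition Cconj (a : C) : C := mkC (Cre a) (- Cim a).

(* inner product: linear in the first variable, conjugate-linear in the
   second; completeness w.r.t. the induced norm. *)
Record HilbertSpace := {
  hv :> Type;
  hzero : hv;
  hadd : hv -> hv -> hv;
  hopp : hv -> hv;
  hscal : C -> hv -> hv;
  hinner : hv -> hv -> C;
  hadd_assoc : forall x y z, hadd x (hadd y z) = hadd (hadd x y) z;
  hadd_comm : forall x y, hadd x y = hadd y x;
  hadd_zero : forall x, hadd hzero x = x;
  hadd_opp : forall x, hadd (hopp x) x = hzero;
  hscal_one : forall x, hscal C1 x = x;
  hscal_mul : forall a b x, hscal a (hscal b x) = hscal (Cmul a b) x;
  hscal_addv : forall a x y, hscal a (hadd x y) = hadd (hscal a x) (hscal a y);
  hscal_adds : forall a b x, hscal (Cadd a b) x = hadd (hscal a x) (hscal b x);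
  hinner_add : forall x y z, hinner (hadd x y) z = Cadd (hinner x z) (hinner y z);
  hinner_scal : forall a x y, hinner (hscal a x) y = Cmul a (hinner x y);
  hinner_conj : forall x y, hinner y x = Cconj (hinner x y);
  hinner_pos : forall x, 0 <= Cre (hinner x x);
  hinner_def : forall x, hinner x x = C0 -> x = hzero;
  hcomplete : forall u : nat -> hv,
    (forall eps, eps > 0 -> exists N, forall n m, (n >= N)%nat -> (m >= N)%nat ->
        sqrt (Cre (hinner (hadd (u n) (hopp (u m))) (hadd (u n) (hopp (u m))))) < eps) ->
    exists l, forall eps, eps > 0 -> exists N, forall n, (n >= N)%nat ->
        sqrt (Cre (hinner (hadd (u n) (hopp l)) (hadd (u n) (hopp l)))) < eps
}.

Arguments hzero {h}.
Arguments hadd {h}.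
Arguments hopp {h}.
Arguments hscal {h}.
Arguments hinner {h}.

Definition hnorm {H : HilbertSpace} (x : H) : R := sqrt (Cre (hinner x x)).
Definition hsub {H : HilbertSpace} (x y : H) : H := hadd x (hopp y).

Fixpoint in_span {H : HilbertSpace} (l : list H) (x : H) : Prop :=
  match l with
  | nil => x = hzero
  | cons v l' => exists (a : C) (y : H), in_span l' y /\ x = hadd (hscal a v) y
  end.

Definition finite_dimensional (H : HilbertSpace) : Prop :=
  exists l : list H, forall x : H, in_span l x.

Record TopGroup := {
  tg :> Type;
  tmul : tg -> tg -> tg;
  tone : tg;
  tinv : tg -> tg;
  tmul_assoc : forall x y z, tmul x (tmul y z) = tmul (tmul x y) z;
  tmul_one_l : forall x, tmul tone x = x;
  tmul_one_r : forall x, tmul x tone = x;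
  tmul_inv_l : forall x, tmul (tinv x) x = tone;
  tmul_inv_r : forall x, tmul x (tinv x) = tone;
  topen : (tg -> Prop) -> Prop;
  topen_full : topen (fun _ => True);
  topen_inter : forall U V, topen U -> topen V -> topen (fun x => U x /\ V x);
  topen_union : forall (I : Type) (U : I -> tg -> Prop),
      (forall i, topen (U i)) -> topen (fun x => exists i, U i x);
  tmul_cont : forall (U : tg -> Prop) x y, topen U -> U (tmul x y) ->
      exists A B, topen A /\ topen B /\ A x /\ B y /\
        (forall a b, A a -> B b -> U (tmul a b));
  tinv_cont : forall U, topen U -> topen (fun x => U (tinv x))
}.

Arguments tmul {t}.
Arguments tone {t}.
Arguments tinv {t}.
Arguments topen {t}.

Record URep (G : TopGroup) (H : HilbertSpace) := {
  rep :> G -> H -> H;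
  rep_add : forall g x y, rep g (hadd x y) = hadd (rep g x) (rep g y);
  rep_scal : forall g a x, rep g (hscal a x) = hscal a (rep g x);
  rep_inner : forall g x y, hinner (rep g x) (rep g y) = hinner x y;
  rep_one : forall x, rep tone x = x;
  rep_mul : forall g h x, rep (tmul g h) x = rep g (rep h x);
  rep_strong_cont : forall (x : H) (g0 : G) eps, eps > 0 ->
      exists U, topen U /\ U g0 /\
        forall g, U g -> hnorm (hsub (rep g x) (rep g0 x)) < eps
}.

Arguments rep {G H}.

(* x is (Q,eps)-invariant: sup_{g in Q} ||pi(g)x - x|| < eps ||x||, where the
   supremum (taken in [0,+oo), i.e. sup of the empty set is 0) is strictly
   below eps ||x||. *)
Definition almost_invariant {G : TopGroup} {H : HilbertSpace} (pi : URep G H)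
    (Q : G -> Prop) (eps : R) (x : H) : Prop :=
  exists delta, 0 <= delta /\ delta < eps * hnorm x /\
    forall g, Q g -> hnorm (hsub (pi g x) x) <= delta.

Definition invariant_vector {G : TopGroup} {H : HilbertSpace} (pi : URep G H)
    (x : H) : Prop :=
  forall g, pi g x = x.

Definition has_nonzero_invariant {G : TopGroup} {H : HilbertSpace}
    (pi : URep G H) : Prop :=
  exists x : H, x <> hzero /\ invariant_vector pi x.

Definition Kazhdan_set (G : TopGroup) (Q : G -> Prop) : Prop :=
  exists eps, eps > 0 /\
    forall (H : HilbertSpace) (pi : URep G H),
      (exists x, almost_invariant pi Q eps x) -> has_nonzero_invariant pi.

(* a non-zero finite dimensional subrepresentation: a pi(G)-invariant linear
   subspace S, spanned by a finite list of its vectors, containing a non-zero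
   vector (finite dimensional subspaces are automatically closed). *)
Definition has_nonzero_fd_subrep {G : TopGroup} {H : HilbertSpace}
    (pi : URep G H) : Prop :=
  exists S : H -> Prop,
    S hzero /\
    (forall x y, S x -> S y -> S (hadd x y)) /\
    (forall a x, S x -> S (hscal a x)) /\
    (forall g x, S x -> S (pi g x)) /\
    (exists l : list H, (forall v, List.In v l -> S v) /\
                        (forall x, S x -> in_span l x)) /\
    (exists x, S x /\ x <> hzero).

(* The vectors of a unitary representation that are orthogonal to every finite dimensional
   subrepresentation form a subrepresentation K.  Given a (Q_n, delta)-invariant vector x
   for a representation without invariant vectors, write x = s + t with s in the closed span of
   the finite dimensional subrepresentations and t in K.  The component t is again almost
   invariant; since K has no non-zero finite dimensional subrepresentation, the hypothesis on
   (Q, eps0) forces |t| < |x|/2.  Hence x is close to some finite dimensional invariant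
   subspace V, the projection of x onto V is almost invariant with norm at least |x|/2, and
   the restriction of the representation to V is the required finite dimensional
   representation.  The closed span is never built: t is obtained as the limit of the
   residuals of x against an increasing minimizing sequence of finite dimensional invariant
   subspaces. *)
From Pilot Require Import Defs.
From Stdlib Require Import Reals Lra Lia List ClassicalEpsilon Classical.
(* Re-import so that [C] denotes the complex numbers, not the binomial of [Reals]. *)
Import Defs.
Open Scope R_scope.

Arguments hadd_assoc {h}. Arguments hadd_comm {h}. Arguments hadd_zero {h}.
Arguments hadd_opp {h}. Arguments hscal_one {h}. Arguments hscal_mul {h}.
Arguments hscal_addv {h}. Arguments hscal_adds {h}. Arguments hinner_add {h}.
Arguments hinner_scal {h}. Arguments hinner_conj {h}. Arguments hinner_pos {h}.
Arguments hinner_def {h}.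
Arguments rep_add {G H}. Arguments rep_scal {G H}. Arguments rep_inner {G H}.
Arguments rep_one {G H}. Arguments rep_mul {G H}. Arguments rep_strong_cont {G H}.
Arguments tmul_inv_r {t}.

Lemma C_ext (a b : C) : Cre a = Cre b -> Cim a = Cim b -> a = b.
Proof. destruct a, b; simpl; intros; subst; reflexivity. Qed.

Definition Cabs2 (z : C) : R := Cre z ^ 2 + Cim z ^ 2.

Lemma Cabs2_le0 (z : C) : Cabs2 z <= 0 -> z = C0.
Proof. unfold Cabs2; intros; apply C_ext; simpl; nra. Qed.

Section VectorAlgebra.
Context {H : HilbertSpace}.
Implicit Types (x y z u v : H) (a : C).

Lemma hadd_zero_r x : hadd x hzero = x.
Proof. rewrite hadd_comm; apply hadd_zero. Qed.

Lemma hadd_opp_r x : hadd x (hopp x) = hzero.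
Proof. rewrite hadd_comm; apply hadd_opp. Qed.

Lemma hadd_cancel_l u x y : hadd u x = hadd u y -> x = y.
Proof.
  intros E. rewrite <- (hadd_zero x), <- (hadd_zero y), <- (hadd_opp u).
  rewrite <- !hadd_assoc, E. reflexivity.
Qed.

Lemma hscal0 x : hscal C0 x = hzero.
Proof.
  apply (hadd_cancel_l (hscal C0 x)). rewrite hadd_zero_r, <- hscal_adds.
  f_equal. apply C_ext; simpl; lra.
Qed.

Lemma hscal_zero a : hscal a (@hzero H) = hzero.
Proof.
  rewrite <- (hscal0 hzero) at 1. rewrite hscal_mul.
  replace (Cmul a C0) with C0 by (apply C_ext; simpl; lra). apply hscal0.
Qed.

Lemma hopp_scal x : hopp x = hscal (mkC (-1) 0) x.
Proof.
  apply (hadd_cancel_l x). rewrite hadd_opp_r.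
  rewrite <- (hscal_one x) at 1. rewrite <- hscal_adds.
  replace (Cadd C1 (mkC (-1) 0)) with C0 by (apply C_ext; simpl; lra).
  symmetry; apply hscal0.
Qed.

Lemma hinner_add_r x y z : hinner x (hadd y z) = Cadd (hinner x y) (hinner x z).
Proof.
  rewrite hinner_conj, hinner_add, (hinner_conj x y), (hinner_conj x z).
  apply C_ext; simpl; lra.
Qed.

Lemma hinner_scal_r a x y : hinner x (hscal a y) = Cmul (Cconj a) (hinner x y).
Proof.
  rewrite hinner_conj, hinner_scal, (hinner_conj x y).
  apply C_ext; simpl; ring.
Qed.

Lemma hinner_zero_l y : hinner hzero y = C0.
Proof. rewrite <- (hscal0 y), hinner_scal. apply C_ext; simpl; ring. Qed.

Lemma hinner_zero_r y : hinner y hzero = C0.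
Proof. rewrite hinner_conj, hinner_zero_l. apply C_ext; simpl; ring. Qed.

Lemma hinner_self_im x : Cim (hinner x x) = 0.
Proof. pose proof (hinner_conj x x) as E. apply (f_equal Cim) in E. simpl in E. lra. Qed.

Lemma hsub_eq0 u v : hsub u v = hzero -> u = v.
Proof.
  unfold hsub; intros E.
  rewrite <- (hadd_zero_r u), <- (hadd_opp v), hadd_assoc, E, hadd_zero. reflexivity.
Qed.

End VectorAlgebra.

Ltac hexpand :=
  unfold hsub in *; rewrite ?hopp_scal in *;
  repeat (rewrite ?hinner_add, ?hinner_add_r, ?hinner_scal, ?hinner_scal_r,
                  ?hinner_zero_l, ?hinner_zero_r in * ).

(* An identity u = v between linear combinations is proved by expanding
   <u - v, u - v> into a polynomial in the inner products of the atoms. *)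
Ltac veq := apply hsub_eq0; apply hinner_def; hexpand; apply C_ext; simpl; ring.

Section Norm.
Context {H : HilbertSpace}.
Implicit Types (x y z u v t : H) (a : C).

Lemma hnorm_ge0 x : 0 <= hnorm x.
Proof. apply sqrt_pos. Qed.

Lemma hnorm_sq x : hnorm x * hnorm x = Cre (hinner x x).
Proof. apply sqrt_sqrt, hinner_pos. Qed.

Lemma hinner_self_eq0 x : Cre (hinner x x) = 0 -> x = hzero.
Proof. intros E; apply hinner_def, C_ext; [exact E | apply hinner_self_im]. Qed.

Lemma hnorm_eq0 x : hnorm x = 0 -> x = hzero.
Proof. intros E; apply hinner_self_eq0. rewrite <- hnorm_sq, E; ring. Qed.

Lemma hnorm_le_of_sq x y : Cre (hinner x x) <= Cre (hinner y y) -> hnorm x <= hnorm y.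
Proof. intros; apply sqrt_le_1_alt; auto. Qed.

Lemma hnorm_sq_le x y : hnorm x <= hnorm y -> Cre (hinner x x) <= Cre (hinner y y).
Proof.
  intros Hxy. rewrite <- (hnorm_sq x), <- (hnorm_sq y).
  pose proof (hnorm_ge0 x). apply Rmult_le_compat; lra.
Qed.

(* The coefficient <t, v> / <v, v> of the orthogonal projection of t onto the line of v. *)
Definition line_coef t v : C :=
  mkC (Cre (hinner t v) / Cre (hinner v v)) (Cim (hinner t v) / Cre (hinner v v)).

Lemma hinner_sub_line_coef t v :
  v <> hzero -> hinner (hsub t (hscal (line_coef t v) v)) v = C0.
Proof.
  intros Hv. assert (Ev : Cre (hinner v v) <> 0) by (contradict Hv; apply hinner_self_eq0, Hv).
  pose proof (hinner_self_im v) as Ei. unfold line_coef.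
  hexpand. apply C_ext; simpl; rewrite Ei; field; auto.
Qed.

Lemma hnorm_sub_line_coef t v : v <> hzero ->
  Cre (hinner (hsub t (hscal (line_coef t v) v)) (hsub t (hscal (line_coef t v) v)))
  = Cre (hinner t t) - Cabs2 (hinner t v) / Cre (hinner v v).
Proof.
  intros Hv. assert (Ev : Cre (hinner v v) <> 0) by (contradict Hv; apply hinner_self_eq0, Hv).
  pose proof (hinner_self_im v) as Ei. pose proof (hinner_conj t v) as Ec.
  unfold line_coef, Cabs2. hexpand. rewrite Ec. simpl. rewrite Ei. field. auto.
Qed.

Lemma hinner_eq0_of_norm_min t v :
  (forall a, hnorm t <= hnorm (hsub t (hscal a v))) -> hinner t v = C0.
Proof.
  intros Hmin. destruct (classic (v = hzero)) as [->|Hv]; [apply hinner_zero_r|].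
  assert (Pv : 0 < Cre (hinner v v)).
  { pose proof (hinner_pos v). destruct (Req_dec (Cre (hinner v v)) 0) as [E|E]; [|lra].
    now apply hinner_self_eq0 in E. }
  pose proof (hnorm_sq_le _ _ (Hmin (line_coef t v))) as Hle.
  rewrite hnorm_sub_line_coef in Hle by exact Hv.
  apply Cabs2_le0. assert (Cabs2 (hinner t v) / Cre (hinner v v) <= 0) by lra.
  apply (Rmult_le_compat_r (Cre (hinner v v))) in H0; [|lra].
  unfold Rdiv in H0. rewrite Rmult_assoc, Rinv_l in H0 by lra. lra.
Qed.

Lemma cauchy_schwarz x y : Cabs2 (hinner x y) <= Cre (hinner x x) * Cre (hinner y y).
Proof.
  destruct (classic (y = hzero)) as [->|Hy].
  - rewrite !hinner_zero_r. unfold Cabs2; simpl. lra.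
  - pose proof (hnorm_sub_line_coef x y Hy) as X.
    pose proof (hinner_pos (hsub x (hscal (line_coef x y) y))) as P. rewrite X in P.
    assert (Py : 0 < Cre (hinner y y)).
    { pose proof (hinner_pos y). destruct (Req_dec (Cre (hinner y y)) 0) as [E|E]; [|lra].
      now apply hinner_self_eq0 in E. }
    apply (Rmult_le_compat_r (Cre (hinner y y))) in P; [|lra].
    unfold Rdiv in P. rewrite Rmult_minus_distr_r, Rmult_assoc, Rinv_l in P by lra. lra.
Qed.

Lemma Cabs2_hinner_le x y : Cabs2 (hinner x y) <= (hnorm x * hnorm y) ^ 2.
Proof.
  replace ((hnorm x * hnorm y) ^ 2) with ((hnorm x * hnorm x) * (hnorm y * hnorm y)) by ring.
  rewrite !hnorm_sq. apply cauchy_schwarz.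
Qed.

Lemma hnorm_triangle x y : hnorm (hadd x y) <= hnorm x + hnorm y.
Proof.
  assert (E : Cre (hinner (hadd x y) (hadd x y)) =
              Cre (hinner x x) + Cre (hinner y y) + 2 * Cre (hinner x y)).
  { pose proof (hinner_conj x y) as Ec. hexpand. rewrite Ec. simpl. ring. }
  pose proof (Cabs2_hinner_le x y). unfold Cabs2 in H0.
  pose proof (hnorm_ge0 x); pose proof (hnorm_ge0 y).
  apply Rsqr_incr_0_var; [|lra]. unfold Rsqr.
  rewrite hnorm_sq, E, <- hnorm_sq, <- (hnorm_sq y).
  assert (Hre : Rabs (Cre (hinner x y)) <= hnorm x * hnorm y).
  { rewrite <- (Rabs_pos_eq (hnorm x * hnorm y)) by nra. apply Rsqr_le_abs_0.
    unfold Rsqr. pose proof (pow2_ge_0 (Cim (hinner x y))). nra. }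
  pose proof (Rle_abs (Cre (hinner x y))). nra.
Qed.

Lemma hnorm_sub_sym x y : hnorm (hsub x y) = hnorm (hsub y x).
Proof. unfold hnorm. f_equal. hexpand. simpl. ring. Qed.

Lemma hnorm_le_add_sub x y : hnorm x <= hnorm y + hnorm (hsub x y).
Proof. replace x with (hadd y (hsub x y)) at 1 by veq. apply hnorm_triangle. Qed.

Lemma hnorm_scal_real (r : R) x : hnorm (hscal (mkC r 0) x) = Rabs r * hnorm x.
Proof.
  pose proof (hnorm_ge0 x). pose proof (Rabs_pos r).
  apply Rsqr_inj; [apply hnorm_ge0 | nra |]. unfold Rsqr.
  rewrite hnorm_sq. hexpand. simpl. rewrite hinner_self_im.
  replace (Rabs r * hnorm x * (Rabs r * hnorm x)) with
    ((Rabs r * Rabs r) * (hnorm x * hnorm x)) by ring.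
  rewrite <- Rabs_mult, Rabs_pos_eq, hnorm_sq by nra. ring.
Qed.

End Norm.

Section Span.
Context {H : HilbertSpace}.
Implicit Types (x y u v w p : H) (l L : list H).

Lemma span_zero l : in_span l hzero.
Proof.
  induction l; simpl; auto. exists C0, hzero. split; auto.
  rewrite hscal0, hadd_zero. reflexivity.
Qed.

Lemma span_add l x y : in_span l x -> in_span l y -> in_span l (hadd x y).
Proof.
  revert x y; induction l as [|v l IH]; simpl; intros x y Hx Hy.
  - subst; apply hadd_zero.
  - destruct Hx as [a [x' [Hx' ->]]]. destruct Hy as [b [y' [Hy' ->]]].
    exists (Cadd a b), (hadd x' y'). split; [apply IH; auto|]. veq.
Qed.

Lemma span_scal l a x : in_span l x -> in_span l (hscal a x).
Proof.
  revert x; induction l as [|v l IH]; simpl; intros x Hx.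
  - subst; apply hscal_zero.
  - destruct Hx as [b [x' [Hx' ->]]].
    exists (Cmul a b), (hscal a x'). split; [apply IH; auto|]. veq.
Qed.

Lemma span_sub l x y : in_span l x -> in_span l y -> in_span l (hsub x y).
Proof. intros; unfold hsub; rewrite hopp_scal; auto using span_add, span_scal. Qed.

Lemma span_mem l v : In v l -> in_span l v.
Proof.
  induction l as [|w l IH]; simpl; [tauto|]. intros [->|Hin].
  - exists C1, hzero. split; [apply span_zero|]. rewrite hscal_one, hadd_zero_r; auto.
  - exists C0, v. split; auto. rewrite hscal0, hadd_zero; auto.
Qed.

Lemma span_app l1 l2 u :
  in_span (l1 ++ l2) u <-> exists a b, in_span l1 a /\ in_span l2 b /\ u = hadd a b.
Proof.
  revert u; induction l1 as [|v l1 IH]; simpl; intros u; split.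
  - intros Hu; exists hzero, u; repeat split; auto. rewrite hadd_zero; auto.
  - intros [a [b [-> [Hb ->]]]]. rewrite hadd_zero; auto.
  - intros [c [y [Hy ->]]]. apply IH in Hy. destruct Hy as [a [b [Ha [Hb ->]]]].
    exists (hadd (hscal c v) a), b. repeat split; auto.
    + exists c, a; auto.
    + apply hadd_assoc.
  - intros [a [b [[c [y [Hy ->]]] [Hb ->]]]].
    exists c, (hadd y b). split.
    + apply IH. exists y, b; auto.
    + symmetry; apply hadd_assoc.
Qed.

Lemma span_app_l l1 l2 u : in_span l1 u -> in_span (l1 ++ l2) u.
Proof.
  intros; apply span_app; exists u, hzero; repeat split; auto using span_zero.
  rewrite hadd_zero_r; auto.
Qed.

Lemma span_app_r l1 l2 u : in_span l2 u -> in_span (l1 ++ l2) u.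
Proof.
  intros; apply span_app; exists hzero, u; repeat split; auto using span_zero.
  rewrite hadd_zero; auto.
Qed.

Definition orth_list y l := forall v, In v l -> hinner y v = C0.

Lemma orth_list_span l y u : orth_list y l -> in_span l u -> hinner y u = C0.
Proof.
  revert u; induction l as [|v l IH]; simpl; intros u Ho Hu.
  - subst; apply hinner_zero_r.
  - destruct Hu as [a [u' [Hu' ->]]].
    rewrite hinner_add_r, hinner_scal_r, (Ho v (or_introl eq_refl)), IH.
    + apply C_ext; simpl; ring.
    + intros w Hw; apply Ho; right; auto.
    + auto.
Qed.

Lemma orth_list_sub l x y : orth_list x l -> orth_list y l -> orth_list (hsub x y) l.
Proof.
  intros Hx Hy u Hu. specialize (Hx u Hu); specialize (Hy u Hu).
  unfold hsub; rewrite hopp_scal, hinner_add, hinner_scal, Hx, Hy. apply C_ext; simpl; ring.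
Qed.

Lemma orth_list_span_eq0 l y : in_span l y -> orth_list y l -> y = hzero.
Proof. intros Hs Ho; apply hinner_def, (orth_list_span l); auto. Qed.

Lemma pythagoras l u y : in_span l u -> orth_list y l ->
  Cre (hinner (hadd u y) (hadd u y)) = Cre (hinner u u) + Cre (hinner y y).
Proof.
  intros Hu Hy. pose proof (orth_list_span l y u Hy Hu) as E1.
  assert (E2 : hinner u y = C0) by (rewrite hinner_conj, E1; apply C_ext; simpl; ring).
  rewrite !hinner_add, !hinner_add_r, E1, E2. simpl. ring.
Qed.

(* Gram-Schmidt, one vector at a time. *)
Lemma proj_exists l x : exists p, in_span l p /\ orth_list (hsub x p) l.
Proof.
  revert x; induction l as [|v l IH]; intros x.
  - exists hzero; split; simpl; auto. intros w [].
  - destruct (IH x) as [p [Hp Hpo]]. destruct (IH v) as [q [Hq Hwo]].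
    set (w := hsub v q) in Hwo.
    assert (Hv : v = hadd w q) by (unfold w; veq).
    destruct (classic (w = hzero)) as [Ew|Ew].
    + exists p; split.
      * exists C0, p. split; auto. rewrite hscal0, hadd_zero; auto.
      * intros u [<-|Hu]; auto.
        rewrite Hv, Ew, hadd_zero. apply (orth_list_span l); auto.
    + set (c := line_coef (hsub x p) w).
      exists (hadd p (hscal c w)). split.
      * exists c, (hsub p (hscal c q)). split.
        -- apply span_sub; auto. apply span_scal; auto.
        -- unfold w; veq.
      * replace (hsub x (hadd p (hscal c w))) with (hsub (hsub x p) (hscal c w)) by veq.
        assert (Ow : hinner (hsub (hsub x p) (hscal c w)) w = C0)
          by (apply hinner_sub_line_coef; auto).
        assert (Ol : orth_list (hsub (hsub x p) (hscal c w)) l).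
        { apply orth_list_sub; auto. intros u Hu.
          rewrite hinner_scal, (Hwo u Hu). apply C_ext; simpl; ring. }
        intros u [<-|Hu]; auto.
        rewrite Hv, hinner_add_r, Ow, (orth_list_span l _ q); auto.
        apply C_ext; simpl; ring.
Qed.

Definition proj l x : H :=
  proj1_sig (constructive_indefinite_description _ (proj_exists l x)).

Definition residual l x : H := hsub x (proj l x).

Lemma proj_span l x : in_span l (proj l x).
Proof. unfold proj; destruct (constructive_indefinite_description _ _); simpl; tauto. Qed.

Lemma residual_orth l x : orth_list (residual l x) l.
Proof. unfold residual, proj; destruct (constructive_indefinite_description _ _); simpl; tauto. Qed.

Lemma proj_unique l x p : in_span l p -> orth_list (hsub x p) l -> p = proj l x.
Proof.
  intros Hp Ho. apply hsub_eq0, (orth_list_span_eq0 l).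
  - apply span_sub; auto; apply proj_span.
  - replace (hsub p (proj l x)) with (hsub (residual l x) (hsub x p)) by (unfold residual; veq).
    apply orth_list_sub; auto; apply residual_orth.
Qed.

Lemma proj_sub l x y : proj l (hsub x y) = hsub (proj l x) (proj l y).
Proof.
  symmetry; apply proj_unique.
  - apply span_sub; apply proj_span.
  - replace (hsub (hsub x y) (hsub (proj l x) (proj l y)))
      with (hsub (residual l x) (residual l y)) by (unfold residual; veq).
    apply orth_list_sub; apply residual_orth.
Qed.

Lemma residual_sub l x y : residual l (hsub x y) = hsub (residual l x) (residual l y).
Proof. unfold residual; rewrite proj_sub; veq. Qed.

Lemma proj_pythagoras l x :
  Cre (hinner x x) = Cre (hinner (proj l x) (proj l x)) +
                     Cre (hinner (residual l x) (residual l x)).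
Proof.
  rewrite <- (pythagoras l); [| apply proj_span | apply residual_orth].
  f_equal; f_equal; unfold residual; veq.
Qed.

Lemma proj_norm_le l x : hnorm (proj l x) <= hnorm x.
Proof.
  apply hnorm_le_of_sq. rewrite (proj_pythagoras l x).
  pose proof (hinner_pos (residual l x)); lra.
Qed.

Lemma residual_norm_le l x : hnorm (residual l x) <= hnorm x.
Proof.
  apply hnorm_le_of_sq. rewrite (proj_pythagoras l x).
  pose proof (hinner_pos (proj l x)); lra.
Qed.

Lemma residual_norm_min l x w : in_span l w -> hnorm (residual l x) <= hnorm (hsub x w).
Proof.
  intros Hw. apply hnorm_le_of_sq.
  replace (hsub x w) with (hadd (hsub (proj l x) w) (residual l x)) by (unfold residual; veq).
  rewrite (pythagoras l).
  - pose proof (hinner_pos (hsub (proj l x) w)); lra.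
  - apply span_sub; auto; apply proj_span.
  - apply residual_orth.
Qed.

Lemma residual_norm_antimono l1 l2 x :
  (forall u, in_span l1 u -> in_span l2 u) -> hnorm (residual l2 x) <= hnorm (residual l1 x).
Proof. intros Hs; apply residual_norm_min, Hs, proj_span. Qed.

Lemma residual_nested_sub l1 l2 x : (forall u, in_span l1 u -> in_span l2 u) ->
  hnorm (hsub (residual l1 x) (residual l2 x)) ^ 2
  = hnorm (residual l1 x) ^ 2 - hnorm (residual l2 x) ^ 2.
Proof.
  intros Hs. rewrite <- !Rsqr_pow2; unfold Rsqr; rewrite !hnorm_sq.
  assert (Hd : in_span l2 (hsub (residual l1 x) (residual l2 x))).
  { replace (hsub (residual l1 x) (residual l2 x)) with (hsub (proj l2 x) (proj l1 x))
      by (unfold residual; veq).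
    apply span_sub; auto using proj_span. }
  pose proof (pythagoras l2 _ _ Hd (residual_orth l2 x)) as P.
  replace (hadd (hsub (residual l1 x) (residual l2 x)) (residual l2 x))
    with (residual l1 x) in P by veq.
  lra.
Qed.

End Span.

Lemma Un_cv_const (c : R) : Un_cv (fun _ => c) c.
Proof. intros e He; exists 0%nat; intros; unfold R_dist; rewrite Rminus_diag, Rabs_R0; exact He. Qed.

Section Limits.
Context {H : HilbertSpace}.
Implicit Types (u v : nat -> H) (l m w : H).

Definition hlim u l : Prop :=
  forall eps, eps > 0 -> exists N, forall n, (n >= N)%nat -> hnorm (hsub (u n) l) < eps.

Lemma hlim_dist_cv u l : hlim u l -> Un_cv (fun n => hnorm (hsub (u n) l)) 0.
Proof.
  intros Hl e He. destruct (Hl e He) as [N HN]. exists N. intros n Hn.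
  unfold R_dist. rewrite Rminus_0_r, Rabs_pos_eq by apply hnorm_ge0. auto.
Qed.

Lemma hlim_norm_cv u l : hlim u l -> Un_cv (fun n => hnorm (u n)) (hnorm l).
Proof.
  intros Hl e He. destruct (Hl e He) as [N HN]. exists N. intros n Hn.
  specialize (HN n Hn). pose proof (hnorm_le_add_sub (u n) l).
  pose proof (hnorm_le_add_sub l (u n)). rewrite hnorm_sub_sym in H1.
  unfold R_dist. apply Rabs_def1; lra.
Qed.

Lemma hlim_const l : hlim (fun _ => l) l.
Proof.
  intros e He. exists 0%nat. intros n _.
  replace (hsub l l) with (@hzero H) by veq.
  unfold hnorm. rewrite hinner_zero_l. simpl. rewrite sqrt_0. exact He.
Qed.

Lemma hlim_sub u v l m : hlim u l -> hlim v m -> hlim (fun n => hsub (u n) (v n)) (hsub l m).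
Proof.
  intros Hu Hv e He.
  destruct (Hu (e / 2)) as [N1 H1]; [lra|]. destruct (Hv (e / 2)) as [N2 H2]; [lra|].
  exists (Nat.max N1 N2). intros n Hn.
  replace (hsub (hsub (u n) (v n)) (hsub l m))
    with (hadd (hsub (u n) l) (hsub m (v n))) by veq.
  eapply Rle_lt_trans; [apply hnorm_triangle|]. rewrite (hnorm_sub_sym m).
  specialize (H1 n ltac:(lia)). specialize (H2 n ltac:(lia)). lra.
Qed.

Lemma hnorm_lim_ge u l c : hlim u l -> (forall n, c <= hnorm (u n)) -> c <= hnorm l.
Proof. intros Hl Hc. exact (Rle_cv_lim Hc (Un_cv_const c) (hlim_norm_cv u l Hl)). Qed.

Lemma hnorm_lim_le u l c : hlim u l -> (forall n, hnorm (u n) <= c) -> hnorm l <= c.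
Proof. intros Hl Hc. exact (Rle_cv_lim Hc (hlim_norm_cv u l Hl) (Un_cv_const c)). Qed.

Lemma hinner_lim_eq0 u l w : hlim u l -> (forall n, hinner (u n) w = C0) -> hinner l w = C0.
Proof.
  intros Hl Hu. apply Cabs2_le0.
  assert (Hb : forall n, Cabs2 (hinner l w) <= hnorm (hsub (u n) l) * hnorm w * (hnorm (hsub (u n) l) * hnorm w)).
  { intros n. replace (hinner l w) with (hinner (hsub l (u n)) w)
      by (pose proof (Hu n); hexpand; rewrite H0; apply C_ext; simpl; ring).
    rewrite hnorm_sub_sym. pose proof (Cabs2_hinner_le (hsub l (u n)) w). lra. }
  assert (Hcv : Un_cv (fun n => hnorm (hsub (u n) l) * hnorm w * (hnorm (hsub (u n) l) * hnorm w)) 0).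
  { replace 0 with (0 * hnorm w * (0 * hnorm w)) by ring.
    pose proof (CV_mult _ _ _ _ (hlim_dist_cv u l Hl) (Un_cv_const (hnorm w))) as Hc.
    exact (CV_mult _ _ _ _ Hc Hc). }
  exact (Rle_cv_lim Hb (Un_cv_const _) Hcv).
Qed.

End Limits.

Section Representations.
Context {G : TopGroup} {H : HilbertSpace} (pi : URep G H).
Implicit Types (x y v : H) (l L : list H).

Lemma rep_zero g : pi g hzero = hzero.
Proof. rewrite <- (hscal0 hzero), rep_scal, !hscal0. reflexivity. Qed.

Lemma rep_sub g x y : pi g (hsub x y) = hsub (pi g x) (pi g y).
Proof. unfold hsub; rewrite !hopp_scal, rep_add, rep_scal; auto. Qed.

Lemma rep_norm g x : hnorm (pi g x) = hnorm x.
Proof. unfold hnorm; rewrite rep_inner; auto. Qed.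

Lemma rep_adjoint g x y : hinner (pi g x) y = hinner x (pi (tinv g) y).
Proof.
  assert (E : y = pi g (pi (tinv g) y)) by (rewrite <- rep_mul, tmul_inv_r, rep_one; auto).
  rewrite E at 1. apply rep_inner.
Qed.

Lemma hlim_rep g (u : nat -> H) y : hlim u y -> hlim (fun n => pi g (u n)) (pi g y).
Proof. intros Hu e He. destruct (Hu e He) as [N HN]. exists N. intros. rewrite <- rep_sub, rep_norm. auto. Qed.

Definition inv_span l := forall g v, in_span l v -> in_span l (pi g v).

Lemma inv_span_nil : inv_span nil.
Proof. intros g v Hv; simpl in *; subst; apply rep_zero. Qed.

Lemma inv_span_app l1 l2 : inv_span l1 -> inv_span l2 -> inv_span (l1 ++ l2).
Proof.
  intros H1 H2 g v Hv. apply span_app in Hv. destruct Hv as [a [b [Ha [Hb ->]]]].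
  rewrite rep_add. apply span_app. exists (pi g a), (pi g b); auto.
Qed.

Lemma orth_list_rep l y g : inv_span l -> orth_list y l -> orth_list (pi g y) l.
Proof.
  intros Hi Ho v Hv. rewrite rep_adjoint. apply (orth_list_span l); auto.
  apply Hi, span_mem; auto.
Qed.

Lemma rep_proj l g x : inv_span l -> pi g (proj l x) = proj l (pi g x).
Proof.
  intros Hi. apply proj_unique.
  - apply Hi, proj_span.
  - rewrite <- rep_sub. apply orth_list_rep; auto. apply residual_orth.
Qed.

Lemma proj_displacement_le l g x : inv_span l ->
  hnorm (hsub (pi g (proj l x)) (proj l x)) <= hnorm (hsub (pi g x) x).
Proof. intros Hi. rewrite rep_proj, <- proj_sub by exact Hi. apply proj_norm_le. Qed.

Lemma residual_displacement_le l g x : inv_span l ->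
  hnorm (hsub (pi g (residual l x)) (residual l x)) <= hnorm (hsub (pi g x) x).
Proof.
  intros Hi.
  assert (E : pi g (residual l x) = residual l (pi g x))
    by (unfold residual; rewrite rep_sub, rep_proj; auto).
  rewrite E, <- residual_sub. apply residual_norm_le.
Qed.

End Representations.

Record closed_subspace {H : HilbertSpace} (P : H -> Prop) := {
  cs_zero : P hzero;
  cs_add : forall x y, P x -> P y -> P (hadd x y);
  cs_scal : forall a x, P x -> P (hscal a x);
  cs_closed : forall (u : nat -> H) l, (forall n, P (u n)) -> hlim u l -> P l
}.

Lemma sig_eq {A : Type} {P : A -> Prop} (a b : sig P) : proj1_sig a = proj1_sig b -> a = b.
Proof. destruct a, b; simpl; intros; subst; f_equal; apply proof_irrelevance. Qed.

Section Subspace.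
Context {H : HilbertSpace} {P : H -> Prop} (c : closed_subspace P).

Lemma cs_opp x : P x -> P (hopp x).
Proof. intros; rewrite hopp_scal; apply (cs_scal _ c); auto. Qed.

(* Completeness is inherited because the subspace is closed. *)
Definition subspace : HilbertSpace.
Proof.
  refine (@Build_HilbertSpace (sig P) (exist P hzero (cs_zero _ c))
    (fun a b => exist P (hadd (proj1_sig a) (proj1_sig b))
                  (cs_add _ c _ _ (proj2_sig a) (proj2_sig b)))
    (fun a => exist P (hopp (proj1_sig a)) (cs_opp _ (proj2_sig a)))
    (fun k a => exist P (hscal k (proj1_sig a)) (cs_scal _ c k _ (proj2_sig a)))
    (fun a b => hinner (proj1_sig a) (proj1_sig b)) _ _ _ _ _ _ _ _ _ _ _ _ _ _).
  all: try (intros; apply sig_eq; simpl;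
            first [apply hadd_assoc | apply hadd_comm | apply hadd_zero | apply hadd_opp
                  | apply hscal_one | apply hscal_mul | apply hscal_addv | apply hscal_adds]).
  - intros; simpl; apply hinner_add.
  - intros; simpl; apply hinner_scal.
  - intros; simpl; apply hinner_conj.
  - intros; simpl; apply hinner_pos.
  - intros x E; apply sig_eq; simpl; apply hinner_def; exact E.
  - intros u Hc. destruct (hcomplete H (fun n => proj1_sig (u n)) Hc) as [l Hl].
    exists (exist P l (cs_closed _ c _ l (fun n => proj2_sig (u n)) Hl)). exact Hl.
Defined.

Lemma span_subspace_val (l : list subspace) (w : subspace) :
  in_span l w -> in_span (map (@proj1_sig H P) l) (proj1_sig w).
Proof.
  revert w; induction l as [|v l IH]; simpl; intros w Hw.
  - subst; reflexivity.
  - destruct Hw as [a [y [Hy ->]]]. exists a, (proj1_sig y). split; auto.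
Qed.

Lemma span_val_subspace (l : list subspace) (u : H) :
  in_span (map (@proj1_sig H P) l) u -> exists w : subspace, in_span l w /\ proj1_sig w = u.
Proof.
  revert u; induction l as [|v l IH]; simpl; intros u Hu.
  - exists (@hzero subspace); split; simpl; auto.
  - destruct Hu as [a [y [Hy ->]]]. destruct (IH y Hy) as [w [Hw Ew]].
    exists (hadd (hscal a v) w). split.
    + exists a, w; auto.
    + simpl. rewrite Ew. reflexivity.
Qed.

Variables (G : TopGroup) (pi : URep G H) (pi_P : forall g x, P x -> P (pi g x)).

Definition subrep : URep G subspace.
Proof.
  refine (@Build_URep G subspace
    (fun g a => exist P (pi g (proj1_sig a)) (pi_P g _ (proj2_sig a))) _ _ _ _ _ _).
  - intros; apply sig_eq; simpl; apply rep_add.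
  - intros; apply sig_eq; simpl; apply rep_scal.
  - intros; simpl; apply rep_inner.
  - intros; apply sig_eq; simpl; apply rep_one.
  - intros; apply sig_eq; simpl; apply rep_mul.
  - intros x g0 eps He. exact (rep_strong_cont pi (proj1_sig x) g0 eps He).
Defined.

Lemma subrep_no_invariant : ~ has_nonzero_invariant pi -> ~ has_nonzero_invariant subrep.
Proof.
  intros Hni [w [Hw0 Hwi]]. apply Hni. exists (proj1_sig w). split.
  - intros E. apply Hw0, sig_eq. exact E.
  - intros g. exact (f_equal (@proj1_sig H P) (Hwi g)).
Qed.

End Subspace.

Lemma span_closed {H : HilbertSpace} (L : list H) : closed_subspace (in_span L).
Proof.
  constructor; [apply span_zero | apply span_add | apply span_scal |].
  intros u l Hu Hl.
  assert (E : residual L l = hzero).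
  { apply hnorm_eq0, Rle_antisym; [|apply hnorm_ge0].
    apply Rle_plus_epsilon; intros eps He. destruct (Hl eps He) as [N HN].
    specialize (HN N (le_n N)). rewrite hnorm_sub_sym in HN.
    pose proof (residual_norm_min L l (u N) (Hu N)). lra. }
  replace l with (proj L l) by (symmetry; apply hsub_eq0, E). apply proj_span.
Qed.

Lemma span_incl {H : HilbertSpace} (S : H -> Prop) (l : list H) w :
  S hzero -> (forall x y, S x -> S y -> S (hadd x y)) -> (forall a x, S x -> S (hscal a x)) ->
  (forall v, In v l -> S v) -> in_span l w -> S w.
Proof.
  intros S0 Sa Ss; revert w; induction l as [|v l IH]; simpl; intros w Hl Hw.
  - subst; auto.
  - destruct Hw as [a [y [Hy ->]]]. apply Sa; auto.
Qed.

Lemma span_subspace_fd {H : HilbertSpace} (L : list H) :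
  finite_dimensional (subspace (span_closed L)).
Proof.
  set (lift := fun v : H => match excluded_middle_informative (in_span L v) with
                            | left h => exist (in_span L) v h
                            | right _ => @hzero (subspace (span_closed L)) end).
  exists (map lift L). intros w.
  assert (Em : map (@proj1_sig H (in_span L)) (map lift L) = L).
  { rewrite map_map. rewrite <- (map_id L) at 2. apply map_ext_in. intros v Hv.
    unfold lift. destruct (excluded_middle_informative _) as [h|h]; auto.
    exfalso; apply h, span_mem; auto. }
  destruct (span_val_subspace (span_closed L) (map lift L) (proj1_sig w))
    as [w' [Hw' Ew']]; [rewrite Em; exact (proj2_sig w)|].
  replace w with w' by (apply sig_eq; auto). exact Hw'.
Qed.

Section FdOrth.
Context {G : TopGroup} {H : HilbertSpace} (pi : URep G H).

Definition fd_orth (y : H) : Prop := forall L, inv_span pi L -> orth_list y L.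

Lemma fd_orth_closed : closed_subspace fd_orth.
Proof.
  constructor.
  - intros L _ v _; apply hinner_zero_l.
  - intros x y Hx Hy L HL v Hv. rewrite hinner_add, (Hx L HL v Hv), (Hy L HL v Hv).
    apply C_ext; simpl; ring.
  - intros a x Hx L HL v Hv. rewrite hinner_scal, (Hx L HL v Hv). apply C_ext; simpl; ring.
  - intros u l Hu Hl L HL v Hv. apply (hinner_lim_eq0 u); auto. intros n; exact (Hu n L HL v Hv).
Qed.

Lemma fd_orth_rep g y : fd_orth y -> fd_orth (pi g y).
Proof. intros Hy L HL. apply orth_list_rep; auto. Qed.

Definition fd_orth_subrep : URep G (subspace fd_orth_closed) :=
  subrep fd_orth_closed G pi fd_orth_rep.

(* A finite dimensional subrepresentation of the restriction to fd_orth is orthogonal to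
   itself. *)
Lemma fd_orth_no_fd_subrep : ~ has_nonzero_fd_subrep fd_orth_subrep.
Proof.
  intros [S [S0 [Sa [Ss [Sg [[l [Hl Hsp]] [x0 [Sx0 Hx0]]]]]]]].
  set (L := map (@proj1_sig H fd_orth) l).
  assert (HL : inv_span pi L).
  { intros g u Hu. destruct (span_val_subspace fd_orth_closed l u Hu) as [w [Hw <-]].
    apply (span_subspace_val fd_orth_closed l (fd_orth_subrep g w)).
    apply Hsp, Sg, (span_incl S l); auto. }
  apply Hx0, sig_eq, (orth_list_span_eq0 L); [| apply (proj2_sig x0 L HL)].
  apply span_subspace_val, Hsp; auto.
Qed.

End FdOrth.

Lemma inf_exists (P : R -> Prop) : (exists r, P r) -> (forall r, P r -> 0 <= r) ->
  exists d, (forall r, P r -> d <= r) /\ (forall eta, eta > 0 -> exists r, P r /\ r < d + eta).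
Proof.
  intros [r0 Hr0] Hpos.
  destruct (completeness (fun s => P (- s))) as [m [Hub Hlub]].
  - exists 0. intros s Hs. specialize (Hpos _ Hs). lra.
  - exists (- r0). rewrite Ropp_involutive. exact Hr0.
  - exists (- m). split.
    + intros r Hr. assert (- r <= m) by (apply Hub; rewrite Ropp_involutive; exact Hr). lra.
    + intros eta Heta. apply NNPP; intros Hn.
      assert (m <= m - eta); [|lra].
      apply Hlub. intros s Hs. apply Rnot_lt_le. intros Hlt. apply Hn. exists (- s). split; auto. lra.
Qed.

Fixpoint concat_upto {A : Type} (f : nat -> list A) (k : nat) : list A :=
  match k with 0 => f 0%nat | S k' => concat_upto f k' ++ f (S k') end.

Lemma span_concat_upto {H : HilbertSpace} (f : nat -> list H) k u :
  in_span (f k) u -> in_span (concat_upto f k) u.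
Proof. destruct k; simpl; auto. apply span_app_r. Qed.

Lemma span_concat_upto_mono {H : HilbertSpace} (f : nat -> list H) k m u :
  (k <= m)%nat -> in_span (concat_upto f k) u -> in_span (concat_upto f m) u.
Proof. intros Hkm; induction Hkm; auto. intros Hu; simpl; apply span_app_l; auto. Qed.

Lemma inv_span_concat_upto {G : TopGroup} {H : HilbertSpace} (pi : URep G H) f :
  (forall k, inv_span pi (f k)) -> forall k, inv_span pi (concat_upto f k).
Proof. intros Hf k; induction k; simpl; auto. apply inv_span_app; auto. Qed.

Lemma minimizing_chain {G : TopGroup} {H : HilbertSpace} (pi : URep G H) (x : H) :
  exists d (W : nat -> list H),
    (forall L, inv_span pi L -> d <= hnorm (residual L x)) /\
    (forall k, inv_span pi (W k)) /\
    (forall k m u, (k <= m)%nat -> in_span (W k) u -> in_span (W m) u) /\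
    Un_cv (fun k => hnorm (residual (W k) x)) d.
Proof.
  destruct (inf_exists (fun r => exists L, inv_span pi L /\ r = hnorm (residual L x)))
    as [d [Hlb Happrox]].
  { exists (hnorm (residual nil x)), nil. split; auto using inv_span_nil. }
  { intros r [L [_ ->]]. apply hnorm_ge0. }
  assert (Hf : forall k, exists L, inv_span pi L /\ hnorm (residual L x) < d + RinvN k).
  { intros k. destruct (Happrox (RinvN k) (cond_pos _)) as [r [[L [HL ->]] Hr]]. eauto. }
  set (f k := proj1_sig (constructive_indefinite_description _ (Hf k))).
  assert (Hfk : forall k, inv_span pi (f k) /\ hnorm (residual (f k) x) < d + RinvN k)
    by (intros k; exact (proj2_sig (constructive_indefinite_description _ (Hf k)))).
  exists d, (concat_upto f). split; [|split; [|split]].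
  - intros L HL. apply Hlb. eauto.
  - apply inv_span_concat_upto. intros k; apply Hfk.
  - intros k m u Hkm. apply span_concat_upto_mono, Hkm.
  - intros e He. destruct (RinvN_cv He) as [N HN]. exists N. intros n Hn.
    specialize (HN n Hn). unfold R_dist in *. rewrite Rminus_0_r, Rabs_pos_eq in HN
      by (apply Rlt_le, cond_pos).
    assert (Hlow : d <= hnorm (residual (concat_upto f n) x))
      by (apply Hlb; exists (concat_upto f n); split; auto;
          apply inv_span_concat_upto; intros k; apply Hfk).
    assert (Hup : hnorm (residual (concat_upto f n) x) <= hnorm (residual (f n) x))
      by (apply residual_norm_antimono, span_concat_upto).
    destruct (Hfk n) as [_ Hfn]. apply Rabs_def1; lra.
Qed.

Section ResidualLimit.
Context {G : TopGroup} {H : HilbertSpace} (pi : URep G H) (x : H) (d : R) (W : nat -> list H).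
Hypotheses (d_lb : forall L, inv_span pi L -> d <= hnorm (residual L x))
  (W_inv : forall k, inv_span pi (W k))
  (W_nested : forall k m u, (k <= m)%nat -> in_span (W k) u -> in_span (W m) u)
  (W_min : Un_cv (fun k => hnorm (residual (W k) x)) d).

Lemma residual_chain_cauchy e : e > 0 -> exists N, forall n m, (n >= N)%nat -> (m >= N)%nat ->
  hnorm (hsub (residual (W n) x) (residual (W m) x)) < e.
Proof.
  intros He.
  assert (Hd : 0 <= d)
    by exact (Rle_cv_lim (fun k => hnorm_ge0 (residual (W k) x)) (Un_cv_const 0) W_min).
  set (eta := Rmin 1 (e * e / (2 * d + 1))).
  assert (Heta : 0 < eta /\ eta <= 1 /\ eta * (2 * d + 1) <= e * e).
  { unfold eta. split; [apply Rmin_case; [lra | apply Rdiv_lt_0_compat; nra]|].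
    split; [apply Rmin_l|]. eapply Rle_trans.
    - apply Rmult_le_compat_r; [lra | apply Rmin_r].
    - unfold Rdiv. rewrite Rmult_assoc, Rinv_l by lra. lra. }
  destruct (W_min eta ltac:(lra)) as [N HN]. exists N.
  assert (Hle : forall n m, (n >= N)%nat -> (n <= m)%nat ->
            hnorm (hsub (residual (W n) x) (residual (W m) x)) < e).
  { (* |r_n - r_m|^2 = |r_n|^2 - |r_m|^2 <= (d + eta)^2 - d^2 <= eta (2 d + 1) *)
    intros n m Hn Hnm. specialize (HN n Hn). unfold R_dist in HN.
    pose proof (residual_nested_sub (W n) (W m) x (fun u => W_nested n m u Hnm)) as E.
    pose proof (d_lb _ (W_inv m)). pose proof (Rabs_def2 _ _ HN).
    pose proof (hnorm_ge0 (hsub (residual (W n) x) (residual (W m) x))). nra. }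
  intros n m Hn Hm. destruct (Nat.le_ge_cases n m); [apply Hle; auto|].
  rewrite hnorm_sub_sym. apply Hle; auto.
Qed.

Lemma residual_chain_converges : exists t, hlim (fun k => residual (W k) x) t.
Proof. exact (hcomplete H _ residual_chain_cauchy). Qed.

Variables (t : H) (W_lim : hlim (fun k => residual (W k) x) t).

Lemma residual_limit_norm : hnorm t = d.
Proof. exact (UL_sequence _ _ _ (hlim_norm_cv _ _ W_lim) W_min). Qed.

Lemma residual_limit_fd_orth : fd_orth pi t.
Proof.
  intros L HL v Hv. apply hinner_eq0_of_norm_min. intros a. rewrite residual_limit_norm.
  apply (hnorm_lim_ge (fun n => hsub (residual (W n) x) (hscal a v))).
  { apply hlim_sub; [exact W_lim | apply hlim_const]. }
  intros n. eapply Rle_trans; [apply (d_lb (W n ++ L)), inv_span_app; auto|].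
  replace (hsub (residual (W n) x) (hscal a v))
    with (hsub x (hadd (proj (W n) x) (hscal a v))) by (unfold residual; veq).
  apply residual_norm_min, span_app. exists (proj (W n) x), (hscal a v).
  auto using proj_span, span_scal, span_mem.
Qed.

Lemma residual_limit_displacement g :
  hnorm (hsub (pi g t) t) <= hnorm (hsub (pi g x) x).
Proof.
  apply (hnorm_lim_le (fun n => hsub (pi g (residual (W n) x)) (residual (W n) x))).
  - apply hlim_sub; [apply hlim_rep|]; exact W_lim.
  - intros n. apply residual_displacement_le, W_inv.
Qed.

End ResidualLimit.

(* t is the component of x orthogonal to the closed span of the finite dimensional
   subrepresentations; only |t| >= dist(x, span) is recorded. *)
Lemma fd_orth_component {G : TopGroup} {H : HilbertSpace} (pi : URep G H) (x : H) :
  exists t, fd_orth pi t /\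
    (forall r, (forall L, inv_span pi L -> r <= hnorm (residual L x)) -> r <= hnorm t) /\
    (forall g, hnorm (hsub (pi g t) t) <= hnorm (hsub (pi g x) x)).
Proof.
  destruct (minimizing_chain pi x) as [d [W [Hlb [Hinv [Hnest Hmin]]]]].
  destruct (residual_chain_converges pi x d W Hlb Hinv Hnest Hmin) as [t Ht].
  exists t. split; [|split].
  - eapply residual_limit_fd_orth; eauto.
  - intros r Hr. rewrite (residual_limit_norm _ _ _ Hmin _ Ht).
    exact (Rle_cv_lim (fun k => Hr _ (Hinv k)) (Un_cv_const r) Hmin).
  - intros g. eapply residual_limit_displacement; eauto.
Qed.

Lemma almost_invariant_mono {G : TopGroup} {H : HilbertSpace} (pi : URep G H)
    (Q Q' : G -> Prop) (e e' : R) (x : H) :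
  (forall g, Q g -> Q' g) -> e' <= e -> almost_invariant pi Q' e' x -> almost_invariant pi Q e x.
Proof.
  intros HQ He [D [HD0 [HD HDq]]]. exists D. split; [exact HD0|]. split; [|auto].
  pose proof (hnorm_ge0 x). nra.
Qed.

Lemma not_Kazhdan_witness (G : TopGroup) (Q : G -> Prop) (e : R) :
  ~ Kazhdan_set G Q -> e > 0 ->
  exists (H : HilbertSpace) (pi : URep G H) (x : H),
    almost_invariant pi Q e x /\ ~ has_nonzero_invariant pi.
Proof.
  intros HK He. apply NNPP; intros Hn. apply HK. exists e; split; auto.
  intros H pi [x Hx]. apply NNPP; intros Hni. apply Hn. exists H, pi, x; auto.
Qed.

Lemma rep_displacement_scal {G : TopGroup} {H : HilbertSpace} (pi : URep G H) (r : R) g s :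
  hnorm (hsub (pi g (hscal (mkC r 0) s)) (hscal (mkC r 0) s)) = Rabs r * hnorm (hsub (pi g s) s).
Proof.
  rewrite rep_scal.
  replace (hsub (hscal (mkC r 0) (pi g s)) (hscal (mkC r 0) s))
    with (hscal (mkC r 0) (hsub (pi g s) s)) by veq.
  apply hnorm_scal_real.
Qed.

Lemma span_subrep_unit_vector {G : TopGroup} {H : HilbertSpace} (pi : URep G H)
    (L : list H) (HL : inv_span pi L) (Q : G -> Prop) (s : H) (D : R) :
  in_span L s -> 0 < hnorm s -> (forall g, Q g -> hnorm (hsub (pi g s) s) <= D) ->
  exists a : subspace (span_closed L), hnorm a = 1 /\
    forall g, Q g -> hnorm (hsub (subrep (span_closed L) G pi HL g a) a) <= D / hnorm s.
Proof.
  intros Hs Hs0 HD. set (r := / hnorm s).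
  assert (Hr : Rabs r = r) by (apply Rabs_pos_eq, Rlt_le, Rinv_0_lt_compat, Hs0).
  exists (exist (in_span L) (hscal (mkC r 0) s) (span_scal L _ s Hs)). split.
  - change (hnorm (hscal (mkC r 0) s) = 1).
    rewrite hnorm_scal_real, Hr. unfold r. field. lra.
  - intros g Hg. change (hnorm (hsub (pi g (hscal (mkC r 0) s)) (hscal (mkC r 0) s)) <= D / hnorm s).
    rewrite rep_displacement_scal, Hr. unfold Rdiv. rewrite Rmult_comm.
    apply Rmult_le_compat_r; [apply Rlt_le, Rinv_0_lt_compat, Hs0 | auto].
Qed.

Definition fd_almost_invariant_rep {G : TopGroup} (Qn : G -> Prop) (e : R)
    (Hn : HilbertSpace) (pn : URep G Hn) : Prop :=
  finite_dimensional Hn /\ ~ has_nonzero_invariant pn /\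
  exists a : Hn, hnorm a = 1 /\
    exists delta, 0 <= delta /\ delta < e /\
      forall g, Qn g -> hnorm (hsub (pn g a) a) <= delta.

Section FdRepresentations.
Context {G : TopGroup} (Q : G -> Prop) (eps0 : R).
Hypothesis fd_subrep_of_almost_invariant : forall (H : HilbertSpace) (pi : URep G H),
  (exists x, almost_invariant pi Q eps0 x) -> has_nonzero_fd_subrep pi.

Lemma fd_orth_not_almost_invariant {H : HilbertSpace} (pi : URep G H) t :
  fd_orth pi t -> ~ almost_invariant pi Q eps0 t.
Proof.
  intros Ht Hai. apply (fd_orth_no_fd_subrep pi), fd_subrep_of_almost_invariant.
  exists (exist _ t Ht). exact Hai.
Qed.

Lemma fd_invariant_span_near {H : HilbertSpace} (pi : URep G H) x :
  almost_invariant pi Q (eps0 / 2) x ->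
  exists L, inv_span pi L /\ hnorm (residual L x) <= hnorm x / 2.
Proof.
  intros [D [HD0 [HD HDq]]]. apply NNPP; intros Hfar.
  destruct (fd_orth_component pi x) as [t [Ht [Htn Htd]]].
  assert (Hxt : hnorm x / 2 <= hnorm t).
  { apply Htn. intros L HL. apply Rnot_lt_le; intros Hlt. apply Hfar. exists L; split; [exact HL | lra]. }
  apply (fd_orth_not_almost_invariant pi t Ht). exists D. split; [exact HD0|]. split.
  - pose proof (hnorm_ge0 x). assert (0 < eps0) by nra.
    pose proof (Rmult_le_compat_l eps0 _ _ ltac:(lra) Hxt). lra.
  - intros g Hg. eapply Rle_trans; [apply Htd | auto].
Qed.

Lemma fd_rep_almost_invariant (Qn : G -> Prop) (en : R) :
  (forall g, Q g -> Qn g) -> eps0 > 0 -> en > 0 -> ~ Kazhdan_set G Qn ->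
  exists (Hn : HilbertSpace) (pn : URep G Hn), fd_almost_invariant_rep Qn en Hn pn.
Proof.
  intros HQ He0 Hen HK. set (dl := Rmin en eps0 / 2).
  assert (Hdl : 0 < dl /\ dl <= en / 2 /\ dl <= eps0 / 2).
  { unfold dl. pose proof (Rmin_l en eps0). pose proof (Rmin_r en eps0).
    split; [apply Rmin_case|]; lra. }
  destruct (not_Kazhdan_witness G Qn dl HK ltac:(lra)) as [H [pi [x [Hx Hni]]]].
  destruct (fd_invariant_span_near pi x) as [L [HL Hnear]].
  { apply (almost_invariant_mono pi Q Qn _ dl); auto; lra. }
  destruct Hx as [D [HD0 [HD HDq]]].
  set (s := proj L x).
  assert (Hs : hnorm x / 2 <= hnorm s).
  { pose proof (proj_pythagoras L x) as P. rewrite <- !hnorm_sq in P.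
    pose proof (hnorm_ge0 s). pose proof (hnorm_ge0 (residual L x)). fold s in P. nra. }
  assert (Hs0 : 0 < hnorm s) by (pose proof (hnorm_ge0 x); nra).
  destruct (span_subrep_unit_vector pi L HL Qn s D (proj_span L x) Hs0) as [a [Ha HaD]].
  { intros g Hg. eapply Rle_trans; [apply proj_displacement_le, HL | auto]. }
  exists (subspace (span_closed L)), (subrep (span_closed L) G pi HL).
  split; [apply span_subspace_fd|]. split; [apply subrep_no_invariant, Hni|].
  exists a. split; [exact Ha|]. exists (D / hnorm s). split; [|split; [|exact HaD]].
  - apply Rmult_le_pos; [exact HD0 | apply Rlt_le, Rinv_0_lt_compat, Hs0].
  - apply (Rmult_lt_reg_r (hnorm s)); [exact Hs0|]. unfold Rdiv.
    rewrite Rmult_assoc, Rinv_l, Rmult_1_r by lra. nra.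
Qed.

End FdRepresentations.

Lemma rep_family_choice (G : TopGroup) (P : nat -> forall H : HilbertSpace, URep G H -> Prop) :
  (forall n, exists (H : HilbertSpace) (pi : URep G H), P n H pi) ->
  exists (Hs : nat -> HilbertSpace) (pis : forall n, URep G (Hs n)), forall n, P n (Hs n) (pis n).
Proof.
  intros HP.
  assert (HP' : forall n, exists p : {H : HilbertSpace & URep G H}, P n (projT1 p) (projT2 p))
    by (intros n; destruct (HP n) as [H [pi Hpi]]; exists (existT _ H pi); exact Hpi).
  set (p n := proj1_sig (constructive_indefinite_description _ (HP' n))).
  exists (fun n => projT1 (p n)), (fun n => projT2 (p n)).
  intros n. exact (proj2_sig (constructive_indefinite_description _ (HP' n))).
Qed.

Theorem lemma6p1 (G : TopGroup) (W : nat -> G -> Prop) (Q : G -> Prop)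
  (eps0 : R) (eps : nat -> R) :
  (* (W_n)_{n>=1} increasing with union G *)
  (forall n, (1 <= n)%nat -> forall g, W n g -> W (S n) g) ->
  (forall g, exists n, (1 <= n)%nat /\ W n g) ->
  eps0 > 0 ->
  (forall (H : HilbertSpace) (pi : URep G H),
      (exists x, almost_invariant pi Q eps0 x) -> has_nonzero_fd_subrep pi) ->
  (* Q_n = W_n u Q is not Kazhdan for any n >= 1 *)
  (forall n, (1 <= n)%nat -> ~ Kazhdan_set G (fun g => W n g \/ Q g)) ->
  (* (eps_n)_{n>=1} positive, decreasing to 0, eps_1 <= eps0 *)
  (forall n, (1 <= n)%nat -> eps n > 0) ->
  (forall n, (1 <= n)%nat -> eps (S n) <= eps n) ->
  Un_cv eps 0 ->
  eps 1%nat <= eps0 ->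
  exists (Hs : nat -> HilbertSpace) (pis : forall n, URep G (Hs n)),
    forall n, (1 <= n)%nat ->
      finite_dimensional (Hs n) /\
      ~ has_nonzero_invariant (pis n) /\
      exists a : Hs n, hnorm a = 1 /\
        exists delta, 0 <= delta /\ delta < eps n /\
          forall g, (W n g \/ Q g) -> hnorm (hsub (pis n g a) a) <= delta.
Proof.
  intros _ _ He0 Hfd HK Hpos _ _ _.
  apply (rep_family_choice G
    (fun n Hn pn => (1 <= n)%nat -> fd_almost_invariant_rep (fun g => W n g \/ Q g) (eps n) Hn pn)).
  intros n. destruct (Compare_dec.le_lt_dec 1 n) as [Hn|Hn].
  - destruct (fd_rep_almost_invariant Q eps0 Hfd (fun g => W n g \/ Q g) (eps n))
      as [Hn' [pn P]]; auto.
    exists Hn', pn; auto.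
  - destruct (fd_rep_almost_invariant Q eps0 Hfd (fun g => W 1%nat g \/ Q g) (eps 1%nat))
      as [Hn' [pn _]]; auto.
    exists Hn', pn. lia.
Qed.
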